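(* Let $\{n_j\}_{j\ge1}$ be an infinite sequence of positive integers with $n_j\mid n_{j+1}$ for all $j$. Let $A=\prod_{j=1}^\infty\mathbb{Z}_{n_j}$ with the product topology (each $\mathbb{Z}_{n_j}=\mathbb{Z}/n_j\mathbb{Z}$ discrete), let $E=(1,1,\dots)\in A$, and let $\bar B$ be the closure in $A$ of $\{nE=(n,n,\dots):n\in\mathbb{Z}\}$. For $k\in\mathbb{Z}$ let $b=kE=(k,k,\dots)$. Then $\{nb:n\in\mathbb{Z}\}$ is dense in $\bar B$ if and only if $\gcd(k,n_j)=1$ for every $j$.
   Context: $A$ is a compact abelian group under coordinatewise addition; its product topology is induced by the metric $\mathrm{dist}(x,y)=\sum_{j\ge1}2^{-j}\frac{\delta_j(x_j,y_j)}{1+\delta_j(x_j,y_j)}$ where $\delta_j$ is the discrete metric on $\mathbb{Z}_{n_j}$. An element $b\in\bar B$ is called a generator if $\{nb:n\in\mathbb{Z}\}$ is dense in $\bar B$. *)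

From mathcomp Require Import all_boot all_order all_algebra.
Set Implicit Arguments. Unset Strict Implicit. Unset Printing Implicit Defensive.
Import Order.TTheory GRing.Theory Num.Theory.
Local Open Scope ring_scope.

(* The group A = prod_{j>=1} Z_{n_j}; coordinates are indexed by j : nat
   (index j here stands for j+1 of the paper). *)
Definition A (n : nat -> nat) : Type := forall j : nat, 'I_(n j).

Definition is_zmul (n : nat -> nat) (z : int) (x y : A n) : Prop :=
  forall j, ((y j : nat)%:Z = (z * (x j : nat)%:Z) %% (n j)%:Z)%Z.

Definition is_kE (n : nat -> nat) (k : int) (y : A n) : Prop :=
  forall j, ((y j : nat)%:Z = k %% (n j)%:Z)%Z.

(* Closure in the product topology (discrete factors), i.e. in the metric
   dist(x,y) = sum_j 2^-j delta_j/(1+delta_j): x is in the closure of S iff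
   for every m some point of S agrees with x on the first m coordinates
   (these cylinder sets form a neighbourhood base of x). *)
Definition in_closure (n : nat -> nat) (S : A n -> Prop) (x : A n) : Prop :=
  forall m : nat, exists y, S y /\ forall j, (j < m)%N -> x j = y j.

Definition Bbar (n : nat -> nat) : A n -> Prop :=
  in_closure (fun y => exists z : int, is_kE z y).

Definition dense_in_Bbar (n : nat -> nat) (b : A n) : Prop :=
  forall x, Bbar x -> in_closure (fun y => exists z : int, is_zmul z b y) x.

From mathcomp Require Import all_boot all_order all_algebra.
Set Implicit Arguments. Unset Strict Implicit. Unset Printing Implicit Defensive.
Import Order.TTheory GRing.Theory Num.Theory.
Local Open Scope ring_scope.

(* If some multiple z b = (zk, zk, ...) approximates E = (1, 1, ...) then
   zk = 1 mod n_j, so k is invertible mod every n_j.  Conversely, a point x of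
   \bar B agrees on the first m coordinates with some wE; if u k = 1 mod n_m
   then (u w) b = (u w k)E agrees with wE modulo n_m, hence modulo every n_j
   with j <= m, because the n_j form a divisibility chain. *)

Lemma coprimez_invmod (k d : int) :
  coprimez k d <-> exists u : int, (u * k = 1 %[mod d])%Z.
Proof.
split=> [/coprimezP [[u v] /= uv] | [u /eqP]].
  by exists u; rewrite -uv addrC mulrC modzMDl.
rewrite eqz_mod_dvd => /dvdzP [q uk1]; apply/coprimezP.
by exists (u, - q) => /=; rewrite mulNr -uk1 opprB addrC subrK.
Qed.

Lemma absz_modz_lt (c : int) (d : nat) :
  (0 < d)%N -> (`|(c %% d%:Z)%Z|%N < d)%N.
Proof.
rewrite -ltz_nat => d_gt0.
by rewrite -ltz_nat gez0_abs ?modz_ge0 ?ltz_pmod // lt0r_neq0.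
Qed.

Section CoordinatesOfMultiples.

Variable n : nat -> nat.

Lemma is_zmul_kE (k z : int) (b y : A n) :
  is_kE k b -> is_zmul z b y <-> is_kE (z * k) y.
Proof. by move=> kb; split=> yb j; rewrite yb kb modzMmr. Qed.

Lemma is_kE_coord_eq (c c' : int) (x y : A n) j :
  is_kE c x -> is_kE c' y -> x j = y j <-> (c = c' %[mod (n j)%:Z])%Z.
Proof.
move=> xc yc'; rewrite -xc -yc'; split=> [-> // | xy].
by apply: val_inj; case: xy.
Qed.

Lemma is_kE_Bbar (c : int) (x : A n) : is_kE c x -> Bbar x.
Proof. by move=> xc m; exists x; split=> //; exists c. Qed.

Hypothesis n_gt0 : forall j, (0 < n j)%N.

Definition kE (c : int) : A n := fun j => Ordinal (absz_modz_lt c (n_gt0 j)).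

Lemma kEP (c : int) : is_kE c (kE c).
Proof.
by move=> j /=; rewrite gez0_abs // modz_ge0 // lt0r_neq0 // ltz_nat.
Qed.

Hypothesis n_dvd : forall j, (n j %| n j.+1)%N.

Lemma eqz_mod_chain (c c' : int) j m :
  (j <= m)%N -> (c = c' %[mod (n m)%:Z])%Z -> (c = c' %[mod (n j)%:Z])%Z.
Proof.
move=> le_jm /eqP; rewrite eqz_mod_dvd => /(dvdz_trans _) dvd_cc'; apply/eqP.
rewrite eqz_mod_dvd dvd_cc' // dvdzE /=.
exact: (homo_leq (@dvdnn) (fun _ _ _ => @dvdn_trans _ _ _) n_dvd).
Qed.

End CoordinatesOfMultiples.

Theorem proposition4p7 (n : nat -> nat)
  (hpos : forall j, (0 < n j)%N)
  (hdiv : forall j, (n j %| n j.+1)%N)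
  (k : int) (b : A n) (hb : is_kE k b) :
  dense_in_Bbar b <-> (forall j, coprimez k (n j)%:Z).
Proof.
split=> [dense j | coprime_k x Bx m].
  have [y [[z yb] agree]] := dense _ (is_kE_Bbar (kEP hpos 1)) j.+1.
  have /(is_kE_coord_eq j (kEP hpos 1) ((is_zmul_kE z y hb).1 yb)) one_zk :=
    agree j (ltnSn j).
  by apply/coprimez_invmod; exists z; rewrite one_zk.
have [y [[w yw] agree]] := Bx m.
have [u uk] := (coprimez_invmod k (n m)%:Z).1 (coprime_k m).
exists (kE hpos (u * w * k)); split.
  by exists (u * w); apply/(is_zmul_kE _ _ hb)/kEP.
move=> j lt_jm; rewrite agree //; apply/(is_kE_coord_eq j yw (kEP hpos _)).
apply: (eqz_mod_chain hdiv (ltnW lt_jm)).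
by rewrite mulrAC mulrC -modzMmr uk modzMmr mulr1.
Qed.
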